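(* Let $m\ge 1$ be odd and let $p$ be defined by $2p=3m+1$. Starting from the configuration with $m+1$ chips of one color, $m$ chips of each of the other two colors, no jokers and no dominoes, there is a sequence of Rule 1 exchanges only which produces $p-1$ dominoes.
   Context: Game model: a configuration is a tuple $(a,b,c,x,d)$ of nonnegative integers: $a,b,c$ colored chips of three colors, $x$ jokers, $d$ dominoes. Rule 1: remove three chips, consisting of some number $j\in\{0,1,2,3\}$ of jokers together with $3-j$ colored chips of pairwise distinct colors, and add one domino and one joker. *)

From Stdlib Require Import Arith Lia Relations.

Record config := Config {
  chipA : nat; chipB : nat; chipC : nat; jokers : nat; dominoes : nat }.

(* Rule 1: remove three chips, namely j jokers (0 <= j <= 3) together with
   3 - j colored chips of pairwise distinct colors, and add one domino and
   one joker.  The booleans ea, eb, ec record whether a chip of color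
   A, B, C respectively is removed (at most one per color = pairwise
   distinct colors); then j = 3 - (ea + eb + ec). *)
Inductive rule1 : config -> config -> Prop :=
| rule1_step (a b c x d : nat) (ea eb ec : bool) :
    Nat.b2n ea <= a -> Nat.b2n eb <= b -> Nat.b2n ec <= c ->
    3 - (Nat.b2n ea + Nat.b2n eb + Nat.b2n ec) <= x ->
    rule1 (Config a b c x d)
          (Config (a - Nat.b2n ea) (b - Nat.b2n eb) (c - Nat.b2n ec)
                  (x - (3 - (Nat.b2n ea + Nat.b2n eb + Nat.b2n ec)) + 1)
                  (d + 1)).

Definition rule1_reach : config -> config -> Prop := clos_refl_trans config rule1.

From Stdlib Require Import Arith Relations Lia.

(* Write m = 2k + 1, so that p - 1 = 3k + 1 = m + k.  The dominoes are
   produced in two phases, each a repetition of a single kind of Rule 1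
   exchange:
   - a rainbow phase: m exchanges each removing one chip of every color
     (j = 0), turning (m+1, m, m, 0, 0) into (1, 0, 0, m, m);
   - a joker phase: k exchanges each removing three jokers (j = 3), which
     lowers the joker count by 2, turning (1, 0, 0, 2k+1, m) into
     (1, 0, 0, 1, m + k). *)

Lemma rule1_rainbow a b c x d :
  rule1 (Config (S a) (S b) (S c) x d) (Config a b c (S x) (S d)).
Proof.
  pose proof (rule1_step (S a) (S b) (S c) x d true true true) as step.
  simpl in step; rewrite !Nat.sub_0_r, !Nat.add_1_r in step.
  apply step; lia.
Qed.

Lemma rule1_jokers a b c x d :
  rule1 (Config a b c (S (S (S x))) d) (Config a b c (S x) (S d)).
Proof.
  pose proof (rule1_step a b c (S (S (S x))) d false false false) as step.
  simpl in step; rewrite !Nat.sub_0_r, !Nat.add_1_r in step.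
  apply step; lia.
Qed.

Lemma reach_rainbow n : forall a b c x d,
  rule1_reach (Config (a + n) (b + n) (c + n) x d)
              (Config a b c (x + n) (d + n)).
Proof.
  induction n as [|n IH]; intros a b c x d.
  - rewrite !Nat.add_0_r; apply rt_refl.
  - rewrite !Nat.add_succ_r.
    eapply rt_trans; [apply rt_step, rule1_rainbow |].
    exact (IH a b c (S x) (S d)).
Qed.

Lemma reach_jokers n : forall a b c x d,
  rule1_reach (Config a b c (S x + 2 * n) d) (Config a b c (S x) (d + n)).
Proof.
  induction n as [|n IH]; intros a b c x d.
  - rewrite !Nat.add_0_r; apply rt_refl.
  - replace (S x + 2 * S n) with (S (S (S (x + 2 * n)))) by lia.
    eapply rt_trans; [apply rt_step, rule1_jokers |].
    rewrite Nat.add_succ_r; exact (IH a b c x (S d)).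
Qed.

Theorem mainTheorem3 (m p : nat) :
  1 <= m -> Nat.Odd m -> 2 * p = 3 * m + 1 ->
  exists cfg : config,
    rule1_reach (Config (m + 1) m m 0 0) cfg /\ dominoes cfg = p - 1.
Proof.
  intros _ [k Hm] Hp.
  exists (Config 1 0 0 1 (m + k)); split; [| simpl; lia].
  apply rt_trans with (Config 1 0 0 m m).
  - rewrite (Nat.add_comm m 1).
    exact (reach_rainbow m 1 0 0 0 0).
  - replace (Config 1 0 0 m m) with (Config 1 0 0 (S 0 + 2 * k) m)
      by (f_equal; lia).
    apply reach_jokers.
Qed.
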